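(* Let $\mathcal F=(F,<,+,0,\ldots)$ be a definably complete expansion of an ordered group. Let $G\subseteq F^m$ be a definably compact definable topological group and let $X\subseteq F^n$ be a definable $G$-set which is closed in $F^n$. Let $\varphi:X\to F$ be a definable continuous function. Then for every $x\in X$ the infimum $\inf\{\varphi(gx)\mid g\in G\}$ exists in $F$, so the function $\Phi:X\to F$, $\Phi(x)=\inf\{\varphi(gx)\mid g\in G\}$, is well-defined; moreover $\Phi$ is definable, $G$-invariant (i.e. $\Phi(gx)=\Phi(x)$ for all $g\in G$, $x\in X$) and continuous. In addition, for each $x\in X$ there exists $g_x\in G$ such that $\Phi(x)=\varphi(g_x x)$.
   Context: All topologies are the order topology on $F$ and the product topology on $F^k$. ''Definable'' means definable in $\mathcal F$ with parameters. $\mathcal F$ is definably complete if every definable subset of $F$ has a supremum and an infimum in $F\cup\{\pm\infty\}$. A definable topological group is a group $(G,\cdot)$ whose underlying set is a definable subset of some $F^m$ and whose multiplication and inverse maps are definable and continuous. A definable set is definably compact if it is closed and bounded in its ambient space $F^m$. A definable $G$-set is a definable set $X\subseteq F^n$ on which $G$ acts via a definable continuous map $G\times X\to X$, $(g,x)\mapsto gx$. *)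

From mathcomp Require Import all_boot.
Set Implicit Arguments.
Unset Strict Implicit.
Unset Printing Implicit Defensive.

(* Ordered groups (written additively; not assumed abelian).           *)
Record ogroup := OGroup {
  carrier :> Type;
  ozero : carrier;
  oadd : carrier -> carrier -> carrier;
  oopp : carrier -> carrier;
  olt : carrier -> carrier -> Prop;
  oaddA : forall x y z, oadd x (oadd y z) = oadd (oadd x y) z;
  oadd0l : forall x, oadd ozero x = x;
  oadd0r : forall x, oadd x ozero = x;
  oaddNl : forall x, oadd (oopp x) x = ozero;
  oaddNr : forall x, oadd x (oopp x) = ozero;
  olt_irrefl : forall x, ~ olt x x;
  olt_trans : forall x y z, olt x y -> olt y z -> olt x z;
  olt_total : forall x y, olt x y \/ x = y \/ olt y x;
  olt_addl : forall x y z, olt x y -> olt (oadd z x) (oadd z y);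
  olt_addr : forall x y z, olt x y -> olt (oadd x z) (oadd y z)
}.

Section Defs.
Variable F : ogroup.

Definition ole (a b : F) : Prop := a = b \/ olt a b.

Definition pt (n : nat) := 'I_n -> F.

Definition vsnoc n (x : pt n) (a : F) : pt n.+1 :=
  fun i => if unlift ord_max i is Some j then x j else a.

Definition lsub m k (z : pt (m + k)) : pt m := fun i => z (lshift k i).
Definition rsub m k (z : pt (m + k)) : pt k := fun i => z (rshift m i).

(* The definable sets (with parameters) of an expansion of (F,<,+,0):  *)
(* a family of boolean algebras D_n of subsets of F^n closed under     *)
(* F x A, A x F, projections, containing the diagonals, the graphs of  *)
(* < and +, and all points (parameters)  (van den Dries' notion of a   *)
(* structure on F expanding (F,<,+)).                                  *)
Record dstruct := DStruct {
  dset : forall n, (pt n -> Prop) -> Prop;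
  ds_compl : forall n (A : pt n -> Prop), dset A -> dset (fun x => ~ A x);
  ds_inter : forall n (A B : pt n -> Prop), dset A -> dset B ->
     dset (fun x => A x /\ B x);
  ds_Fprod : forall n (A : pt n -> Prop), dset A ->
     dset (fun x : pt n.+1 => A (fun j => x (lift ord0 j)));
  ds_prodF : forall n (A : pt n -> Prop), dset A ->
     dset (fun x : pt n.+1 => A (fun j => x (lift ord_max j)));
  ds_diag : forall n (i j : 'I_n), dset (fun x : pt n => x i = x j);
  ds_proj : forall n (A : pt n.+1 -> Prop), dset A ->
     dset (fun x : pt n => exists a, A (vsnoc x a));
  ds_lt : dset (fun x : pt 2 => olt (x ord0) (x ord_max));
  ds_add : dset (fun x : pt 3 =>
     oadd (x (Ordinal (isT : (0 < 3)%N))) (x (Ordinal (isT : (1 < 3)%N)))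
       = x (Ordinal (isT : (2 < 3)%N)));
  ds_const : forall a : F, dset (fun x : pt 1 => x ord0 = a)
}.

Variable D : dstruct.

Definition definable n (A : pt n -> Prop) : Prop := dset D A.

Definition dfun n k (A : pt n -> Prop) (f : pt n -> pt k) : Prop :=
  definable (fun z : pt (n + k) =>
     A (lsub z) /\ forall j, rsub z j = f (lsub z) j).

Inductive ext := ninf | fin of F | pinf.
Definition ext_le (s t : ext) : Prop :=
  match s, t with
  | ninf, _ => True
  | _, pinf => True
  | fin a, fin b => ole a b
  | _, _ => False
  end.
Definition is_sup_ext (A : F -> Prop) (s : ext) : Prop :=
  (forall a, A a -> ext_le (fin a) s) /\
  (forall t, (forall a, A a -> ext_le (fin a) t) -> ext_le s t).
Definition is_inf_ext (A : F -> Prop) (s : ext) : Prop :=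
  (forall a, A a -> ext_le s (fin a)) /\
  (forall t, (forall a, A a -> ext_le t (fin a)) -> ext_le t s).

Definition definably_complete : Prop :=
  forall A : F -> Prop, definable (fun x : pt 1 => A (x ord0)) ->
    (exists s, is_sup_ext A s) /\ (exists s, is_inf_ext A s).

Definition is_inf (A : F -> Prop) (s : F) : Prop :=
  (forall a, A a -> ole s a) /\ (forall t, (forall a, A a -> ole t a) -> ole t s).

(* Topology: order topology on F, product topology on F^n.  Basic open *)
(* boxes: products of open intervals / open rays / F.                  *)
Definition in_box n (lo hi : 'I_n -> option F) (x : pt n) : Prop :=
  forall i,
    (match lo i with None => True | Some a => olt a (x i) end) /\
    (match hi i with None => True | Some b => olt (x i) b end).

Definition continuous_on n k (A : pt n -> Prop) (f : pt n -> pt k) : Prop :=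
  forall x, A x -> forall lo hi, in_box lo hi (f x) ->
    exists lo' hi', in_box lo' hi' x /\
      forall y, A y -> in_box lo' hi' y -> in_box lo hi (f y).

Definition closed_set n (A : pt n -> Prop) : Prop :=
  forall x, ~ A x -> exists lo hi, in_box lo hi x /\
    forall y, in_box lo hi y -> ~ A y.

Definition bounded_set n (A : pt n -> Prop) : Prop :=
  exists lo hi : pt n, forall x, A x -> forall i, ole (lo i) (x i) /\ ole (x i) (hi i).

Definition definably_compact n (A : pt n -> Prop) : Prop :=
  definable A /\ closed_set A /\ bounded_set A.

Record dtopgroup (m : nat) := DTopGroup {
  gset : pt m -> Prop;
  gmul : pt m -> pt m -> pt m;
  ginv : pt m -> pt m;
  gone : pt m;
  g_one : gset gone;
  g_mul : forall g h, gset g -> gset h -> gset (gmul g h);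
  g_inv : forall g, gset g -> gset (ginv g);
  g_mulA : forall g h k, gset g -> gset h -> gset k ->
     gmul g (gmul h k) = gmul (gmul g h) k;
  g_mul1l : forall g, gset g -> gmul gone g = g;
  g_mul1r : forall g, gset g -> gmul g gone = g;
  g_mulVl : forall g, gset g -> gmul (ginv g) g = gone;
  g_mulVr : forall g, gset g -> gmul g (ginv g) = gone;
  g_def : definable gset;
  g_mul_def : dfun (fun z : pt (m + m) => gset (lsub z) /\ gset (rsub z))
                   (fun z => gmul (lsub z) (rsub z));
  g_mul_cont : continuous_on (fun z : pt (m + m) => gset (lsub z) /\ gset (rsub z))
                   (fun z => gmul (lsub z) (rsub z));
  g_inv_def : dfun gset ginv;
  g_inv_cont : continuous_on gset ginv
}.

Record dGset m (G : dtopgroup m) (n : nat) := DGset {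
  xset : pt n -> Prop;
  act : pt m -> pt n -> pt n;
  x_act : forall g x, gset G g -> xset x -> xset (act g x);
  x_act1 : forall x, xset x -> act (gone G) x = x;
  x_actM : forall g h x, gset G g -> gset G h -> xset x ->
     act (gmul G g h) x = act g (act h x);
  x_def : definable xset;
  x_act_def : dfun (fun z : pt (m + n) => gset G (lsub z) /\ xset (rsub z))
                   (fun z => act (lsub z) (rsub z));
  x_act_cont : continuous_on (fun z : pt (m + n) => gset G (lsub z) /\ xset (rsub z))
                   (fun z => act (lsub z) (rsub z))
}.

Definition to1 n (f : pt n -> F) : pt n -> pt 1 := fun x _ => f x.

End Defs.

(** The minimum of [g |-> phi (g x)] over the definably compact group is
    attained: the sublevel sets [{g | phi (g x) <= t}] form a definable family
    of nonempty closed bounded sets, increasing in [t], and such a family has a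
    common point because in a definably complete structure the projection of a
    closed definable set along a bounded coordinate is again closed.  This
    yields [Phi] together with minimizers [g_x]; invariance is the group law.
    [Phi] is upper semicontinuous since [Phi y <= phi (g_x y)] and the right
    side is continuous in [y]; it is lower semicontinuous since
    [{y | Phi y <= a}] is the projection of the closed set
    [{(y, g) | phi (g y) <= a}] along the bounded factor [G]. *)

From mathcomp Require Import all_boot zify.
From Stdlib Require Import Classical ClassicalEpsilon FunctionalExtensionality PropExtensionality.
Set Implicit Arguments.
Unset Strict Implicit.
Unset Printing Implicit Defensive.

Section OrderedGroup.
Variable F : ogroup.
Implicit Types a b c : F.

Lemma ole_refl a : ole a a. Proof. by left. Qed.
Lemma olt_ole a b : olt a b -> ole a b. Proof. by right. Qed.
Lemma ole_olt_trans a b c : ole a b -> olt b c -> olt a c.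
Proof. by case=> [->|h] //; apply: olt_trans. Qed.
Lemma olt_ole_trans a b c : olt a b -> ole b c -> olt a c.
Proof. by move=> h [<-|h'] //; apply: olt_trans h h'. Qed.
Lemma ole_trans a b c : ole a b -> ole b c -> ole a c.
Proof. case=> [->|h] // h'; right; exact: olt_ole_trans h h'. Qed.
Lemma olt_nole a b : olt a b -> ~ ole b a.
Proof. move=> h h'; exact: (olt_irrefl (olt_ole_trans h h')). Qed.
Lemma ole_anti a b : ole a b -> ole b a -> a = b.
Proof. by case=> [//|h] [//|h']; case: (olt_irrefl (olt_trans h h')). Qed.
Lemma ole_or_olt a b : ole a b \/ olt b a.
Proof. by case: (olt_total a b) => [h|[->|h]]; [left; right|left; left|right]. Qed.
Lemma ole_total a b : ole a b \/ ole b a.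
Proof. by case: (ole_or_olt a b) => h; [left|right; right]. Qed.
Lemma not_olt_ole a b : ~ olt a b -> ole b a.
Proof. by case: (ole_or_olt b a) => // h []. Qed.
Lemma not_ole_olt a b : ~ ole a b -> olt b a.
Proof. by case: (ole_or_olt a b). Qed.

Definition nontrivial := exists a b : F, olt a b.

(* The positive element [- x + y] shifts any point up or down. *)
Lemma nontrivial_olt_below : nontrivial -> forall a, exists b, olt b a.
Proof.
case=> x [y hxy] a; set d := oadd (oopp x) y.
have d_gt0 : olt (ozero F) d by rewrite -(oaddNl x); apply: olt_addl.
have md_lt0 : olt (oopp d) (ozero F).
  by have := olt_addl (oopp d) d_gt0; rewrite oadd0r oaddNl.
by exists (oadd a (oopp d)); have := olt_addl a md_lt0; rewrite oadd0r.
Qed.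

Lemma nontrivial_olt_above : nontrivial -> forall a, exists b, olt a b.
Proof.
case=> x [y hxy] a; set d := oadd (oopp x) y.
have d_gt0 : olt (ozero F) d by rewrite -(oaddNl x); apply: olt_addl.
by exists (oadd a d); have := olt_addl a d_gt0; rewrite oadd0r.
Qed.

Lemma trivial_eq : ~ nontrivial -> forall a b, a = b.
Proof.
move=> nt a b; case: (olt_total a b) => [h|[//|h]]; case: nt; by do 2 eexists; eauto.
Qed.

Definition fmax a b : F := if excluded_middle_informative (olt a b) then b else a.
Definition fmin a b : F := if excluded_middle_informative (olt a b) then a else b.

Lemma fmax_olt a b c : olt (fmax a b) c <-> olt a c /\ olt b c.
Proof.
rewrite /fmax; case: excluded_middle_informative => h; split => [h'|[]//].
- by split => //; apply: olt_trans h h'.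
- by split => //; exact: ole_olt_trans (not_olt_ole h) h'.
Qed.
Lemma olt_fmin a b c : olt c (fmin a b) <-> olt c a /\ olt c b.
Proof.
rewrite /fmin; case: excluded_middle_informative => h; split => [h'|[]//].
- by split => //; apply: olt_trans h' h.
- by split => //; exact: olt_ole_trans h' (not_olt_ole h).
Qed.

End OrderedGroup.

Section Points.
Variable F : ogroup.

(* Coordinates indexed by [nat], with junk value [0] out of range, so that
   identities between points of different dimensions reduce to arithmetic. *)
Definition coord n (x : pt F n) (p : nat) : F :=
  if (insub p : option 'I_n) is Some i then x i else ozero F.

Lemma coord_ord n (x : pt F n) (i : 'I_n) : coord x i = x i.
Proof.
rewrite /coord; case: insubP => [j _ e|]; last by rewrite ltn_ord.
by congr x; apply: val_inj.
Qed.

Lemma coord_out n (x : pt F n) p : n <= p -> coord x p = ozero F.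
Proof. by move=> h; rewrite /coord; case: insubP => [j hj _|//]; rewrite ltnNge h in hj. Qed.

Lemma pt_ext n (x y : pt F n) : (forall p, p < n -> coord x p = coord y p) -> x = y.
Proof. move=> h; apply: functional_extensionality => i; rewrite -!coord_ord; exact: h. Qed.

Lemma coord_cast a b (e : a = b) (w : pt F b) p :
  coord (fun i : 'I_a => w (cast_ord e i)) p = coord w p.
Proof.
case: (ltnP p a) => h; last by rewrite !coord_out //; subst.
by have -> : p = Ordinal h by []; rewrite coord_ord -coord_ord.
Qed.

Definition vcat T k j (f : 'I_k -> T) (g : 'I_j -> T) : 'I_(k + j) -> T :=
  fun i => match split i with inl a => f a | inr b => g b end.

Lemma vcat_lshift T k j (f : 'I_k -> T) (g : 'I_j -> T) i : vcat f g (lshift j i) = f i.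
Proof. by rewrite /vcat (unsplitK (inl i : 'I_k + 'I_j)). Qed.
Lemma vcat_rshift T k j (f : 'I_k -> T) (g : 'I_j -> T) i : vcat f g (rshift k i) = g i.
Proof. by rewrite /vcat (unsplitK (inr i : 'I_k + 'I_j)). Qed.

Lemma coord_vcat k j (x : pt F k) (z : pt F j) p :
  coord (vcat x z) p = if p < k then coord x p else coord z (p - k).
Proof.
case: (ltnP p (k + j)) => hp; last by rewrite coord_out //; case: ifP => h; rewrite coord_out //; lia.
have -> : p = Ordinal hp by [].
rewrite coord_ord /vcat; case: splitP => [a /= ea|b /= eb].
  by rewrite ea coord_ord.
by rewrite eb addKn coord_ord.
Qed.

Lemma coord_vsnoc n (x : pt F n) a p :
  coord (vsnoc x a) p = if p < n then coord x p else if p == n then a else ozero F.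
Proof.
case: (ltnP p n.+1) => hp; last by rewrite coord_out // !ifN //; lia.
have -> : p = Ordinal hp by [].
rewrite coord_ord /vsnoc; case: unliftP => [j /= ej|/= e].
  have -> : p = j by rewrite -(lift_max j) -ej.
  by rewrite ltn_ord coord_ord.
have -> : p = n by move/(congr1 val): e.
by rewrite ltnn eqxx.
Qed.


Lemma coord_rsub k j (z : pt F (k + j)) p : coord (rsub z) p = coord z (k + p).
Proof.
case: (ltnP p j) => h; last by rewrite !coord_out //; lia.
by have -> : p = Ordinal h by []; rewrite coord_ord /rsub -coord_ord.
Qed.

Definition vinit n (w : pt F n.+1) : pt F n := fun i => w (lift ord_max i).

Lemma coord_vinit n (w : pt F n.+1) p :
  coord (vinit w) p = if p < n then coord w p else ozero F.
Proof.
case: ltnP => h; last by rewrite coord_out.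
by have -> : p = Ordinal h by []; rewrite coord_ord /vinit -coord_ord lift_max.
Qed.

Lemma vsnoc_lift n (x : pt F n) a i : vsnoc x a (lift ord_max i) = x i.
Proof. by rewrite /vsnoc liftK. Qed.
Lemma vsnoc_max n (x : pt F n) a : vsnoc x a ord_max = a.
Proof. by rewrite /vsnoc unlift_none. Qed.
Lemma vinit_vsnoc n (x : pt F n) a : vinit (vsnoc x a) = x.
Proof. by apply: functional_extensionality => i; rewrite /vinit vsnoc_lift. Qed.
Lemma vsnoc_vinit n (w : pt F n.+1) : vsnoc (vinit w) (w ord_max) = w.
Proof. by apply: functional_extensionality => i; rewrite /vsnoc; case: unliftP => [j ->|->]. Qed.

Lemma lsub_vcat k j (x : pt F k) (z : pt F j) : lsub (vcat x z) = x.
Proof. by apply: functional_extensionality => i; rewrite /lsub vcat_lshift. Qed.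
Lemma rsub_vcat k j (x : pt F k) (z : pt F j) : rsub (vcat x z) = z.
Proof. by apply: functional_extensionality => i; rewrite /rsub vcat_rshift. Qed.

Lemma vsnoc_vcat_cast k j (x : pt F k) (z : pt F j) a :
  (fun i => vsnoc (vcat x z) a (cast_ord (addnS k j) i)) = vcat x (vsnoc z a).
Proof.
apply: pt_ext => p hp; rewrite coord_cast coord_vsnoc !coord_vcat coord_vsnoc.
case: (ltnP p k) => h; first by rewrite ifT //; lia.
case: (ltnP p (k + j)) => h'; first by rewrite ifT //; lia.
have -> : p = k + j by lia.
by rewrite eqxx addKn ltnn eqxx.
Qed.

Lemma rsub_cast_vinit k j (w : pt F (k + j).+1) :
  rsub (fun i : 'I_(k + j.+1) => w (cast_ord (addnS k j) i)) = vsnoc (rsub (vinit w)) (w ord_max).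
Proof.
apply: pt_ext => p hp; rewrite coord_rsub coord_cast coord_vsnoc coord_rsub coord_vinit.
case: ltnP => h; first by rewrite ifT //; lia.
have -> : p = j by lia.
by rewrite eqxx -coord_ord.
Qed.

End Points.

Section Boxes.
Variable F : ogroup.

Definition lo_ok (o : option F) (a : F) := if o is Some l then olt l a else True.
Definition hi_ok (o : option F) (a : F) := if o is Some u then olt a u else True.

Lemma in_boxE n lo hi (x : pt F n) :
  in_box lo hi x <-> forall i, lo_ok (lo i) (x i) /\ hi_ok (hi i) (x i).
Proof. by []. Qed.


Lemma in_box1 (lo hi : 'I_1 -> option F) (u : pt F 1) :
  in_box lo hi u <-> lo_ok (lo ord0) (u ord0) /\ hi_ok (hi ord0) (u ord0).
Proof. by split=> [h|h i]; [exact: h|rewrite (ord1 i)]. Qed.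

Lemma lo_ok_ole o (a b : F) : lo_ok o a -> ole a b -> lo_ok o b.
Proof. case: o => //= l h h'; exact: olt_ole_trans h h'. Qed.
Lemma hi_ok_ole o (a b : F) : hi_ok o b -> ole a b -> hi_ok o a.
Proof. case: o => //= u h h'; exact: ole_olt_trans h' h. Qed.

Definition omax (o1 o2 : option F) :=
  match o1, o2 with Some a, Some b => Some (fmax a b) | Some a, None => Some a | None, o => o end.
Definition omin (o1 o2 : option F) :=
  match o1, o2 with Some a, Some b => Some (fmin a b) | Some a, None => Some a | None, o => o end.

Lemma lo_ok_omax o1 o2 a : lo_ok (omax o1 o2) a <-> lo_ok o1 a /\ lo_ok o2 a.
Proof. case: o1 o2 => [x|] [y|] /=; try apply: fmax_olt; tauto. Qed.
Lemma hi_ok_omin o1 o2 a : hi_ok (omin o1 o2) a <-> hi_ok o1 a /\ hi_ok o2 a.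
Proof. case: o1 o2 => [x|] [y|] /=; try apply: olt_fmin; tauto. Qed.

Lemma in_box_inter n l1 h1 l2 h2 (x : pt F n) :
  in_box (fun i => omax (l1 i) (l2 i)) (fun i => omin (h1 i) (h2 i)) x <->
  in_box l1 h1 x /\ in_box l2 h2 x.
Proof.
rewrite !in_boxE; split=> [h|[h1' h2'] i].
  by split=> i; have [/lo_ok_omax [? ?] /hi_ok_omin [? ?]] := h i.
have [? ?] := h1' i; have [? ?] := h2' i.
by split; [apply/lo_ok_omax|apply/hi_ok_omin].
Qed.

Lemma in_box_cat k j lo hi (w : pt F (k + j)) :
  in_box lo hi w <->
  in_box (fun i => lo (lshift j i)) (fun i => hi (lshift j i)) (lsub w) /\
  in_box (fun i => lo (rshift k i)) (fun i => hi (rshift k i)) (rsub w).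
Proof.
split=> [h|[h1 h2] i]; first by split=> i; exact: h.
by case: (splitP i) => [a e|b e]; [have -> : i = lshift j a|have -> : i = rshift k b];
  rewrite ?e //; apply: val_inj.
Qed.

Lemma in_box_vcat k j l1 h1 l2 h2 (w : pt F (k + j)) :
  in_box (vcat l1 l2) (vcat h1 h2) w <-> in_box l1 h1 (lsub w) /\ in_box l2 h2 (rsub w).
Proof.
rewrite in_box_cat.
have E (T : Type) (f : 'I_k -> T) (g : 'I_j -> T) :
  (fun i => vcat f g (lshift j i)) = f /\ (fun i => vcat f g (rshift k i)) = g.
  by split; apply: functional_extensionality => i; rewrite ?vcat_lshift ?vcat_rshift.
by rewrite (E _ l1 l2).1 (E _ l1 l2).2 (E _ h1 h2).1 (E _ h1 h2).2.
Qed.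

Lemma in_box_vsnoc n lo hi (w : pt F n.+1) :
  in_box lo hi w <->
  in_box (fun i => lo (lift ord_max i)) (fun i => hi (lift ord_max i)) (vinit w) /\
  lo_ok (lo ord_max) (w ord_max) /\ hi_ok (hi ord_max) (w ord_max).
Proof.
split=> [h|[h1 h2] i]; first by split; [move=> i; exact: h|exact: h].
by case: (unliftP ord_max i) => [a ->|->]; [exact: h1|].
Qed.

(* Boxes with finite bounds everywhere: unlike [in_box], membership is a
   first-order condition in the bounds [p q]. *)
Definition in_fbox n (p q y : pt F n) := forall i, olt (p i) (y i) /\ olt (y i) (q i).

Lemma in_fbox_exists n (y : pt F n) : nontrivial F -> exists p q, in_fbox p q y.
Proof.
move=> nt.
exists (fun i => proj1_sig (constructive_indefinite_description _ (nontrivial_olt_below nt (y i)))).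
exists (fun i => proj1_sig (constructive_indefinite_description _ (nontrivial_olt_above nt (y i)))).
by move=> i; split; case: constructive_indefinite_description.
Qed.

Lemma in_fbox_inter n (p q y : pt F n) lo hi :
  in_fbox p q y -> in_box lo hi y ->
  exists p' q', in_fbox p' q' y /\
    forall y', in_fbox p' q' y' -> in_fbox p q y' /\ in_box lo hi y'.
Proof.
pose lomix (l : option F) (a : F) := if l is Some b then fmax b a else a.
pose himix (l : option F) (a : F) := if l is Some b then fmin b a else a.
move=> h1 h2; exists (fun i => lomix (lo i) (p i)), (fun i => himix (hi i) (q i)); split.
  move=> i; have [a1 b1] := h1 i; have [a2 b2] := h2 i; rewrite /lomix /himix.
  by case: (lo i) a2 => [l|] a2; case: (hi i) b2 => [u|] b2; split => //;
     try apply/fmax_olt; try apply/olt_fmin.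
move=> y' h; split=> i; have := h i; rewrite /lomix /himix;
  case: (lo i) => [l|]; case: (hi i) => [u|] /=; rewrite ?fmax_olt ?olt_fmin; tauto.
Qed.

End Boxes.

Section Definability.
Variables (F : ogroup) (D : dstruct F).
Notation def := (definable D).

Lemma definable_ext n (A B : pt F n -> Prop) : (forall x, A x <-> B x) -> def A -> def B.
Proof.
move=> h; have -> // : A = B.
by apply: functional_extensionality => x; apply: propositional_extensionality.
Qed.

Lemma definable_not n (A : pt F n -> Prop) : def A -> def (fun x => ~ A x).
Proof. exact: ds_compl. Qed.
Lemma definable_and n (A B : pt F n -> Prop) : def A -> def B -> def (fun x => A x /\ B x).
Proof. exact: ds_inter. Qed.
Lemma definable_or n (A B : pt F n -> Prop) : def A -> def B -> def (fun x => A x \/ B x).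
Proof.
move=> hA hB; apply: (@definable_ext _ (fun x => ~ (~ A x /\ ~ B x))); first by move=> x; tauto.
by apply/definable_not/definable_and; apply: definable_not.
Qed.
Lemma definable_imp n (A B : pt F n -> Prop) : def A -> def B -> def (fun x => A x -> B x).
Proof.
move=> hA hB; apply: (@definable_ext _ (fun x => ~ A x \/ B x)); first by move=> x; tauto.
by apply: definable_or => //; apply: definable_not.
Qed.

Lemma definable_true n : def (fun _ : pt F n => True).
Proof.
apply: (@definable_ext _ (fun x : pt F n => exists a, vsnoc x a ord_max = vsnoc x a ord_max)).
  by move=> x; split => // _; exists (ozero F).
exact: ds_proj (ds_diag D ord_max ord_max).
Qed.

Lemma definable_cast a b (e : a = b) (A : pt F a -> Prop) :
  def A -> def (fun w : pt F b => A (fun i => w (cast_ord e i))).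
Proof.
case: b / e => h; apply: definable_ext h => x.
suff -> : (fun i => x (cast_ord (erefl a) i)) = x by [].
by apply: functional_extensionality => i; rewrite cast_ord_id.
Qed.

Lemma definable_forall_ord n j (P : 'I_j -> pt F n -> Prop) :
  (forall i, def (P i)) -> def (fun x => forall i, P i x).
Proof.
move=> h.
suff H (s : seq 'I_j) : def (fun x => forall i, i \in s -> P i x).
  by apply: definable_ext (H (enum 'I_j)) => x; split=> H' i //; apply: H'; rewrite mem_enum.
elim: s => [|i s IH]; first by apply: definable_ext (definable_true n) => x; split.
apply: definable_ext (definable_and (h i) IH) => x; split.
  by case=> h1 h2 i'; rewrite in_cons => /orP [/eqP ->|]; [|apply: h2].
by move=> H; split=> [|i' hi']; apply: H; rewrite in_cons ?eqxx ?hi' ?orbT.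
Qed.

Lemma definable_rsub k j (A : pt F j -> Prop) : def A -> def (fun w : pt F (k + j) => A (rsub w)).
Proof.
move=> hA; elim: k => [|k IH].
  apply: definable_ext hA => x; suff -> : rsub (m := 0) x = x by [].
  by apply: pt_ext => p hp; rewrite coord_rsub.
apply: definable_ext (ds_Fprod IH) => w.
suff -> : rsub (fun i : 'I_(k + j) => w (lift ord0 i)) = rsub (m := k.+1) w by [].
apply: pt_ext => p hp; rewrite !coord_rsub.
case: (ltnP (k + p) (k + j)) => h; last by rewrite !coord_out //; lia.
have -> : k + p = Ordinal h by [].
by rewrite coord_ord -(coord_ord w (lift ord0 (Ordinal h))).
Qed.

Lemma definable_exists_vcat k j (P : pt F (k + j) -> Prop) :
  def P -> def (fun x : pt F k => exists z : pt F j, P (vcat x z)).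
Proof.
elim: j P => [|j IH] P hP.
  have vcat0 (x : pt F k) (z : pt F 0) : vcat x z = (fun i => x (cast_ord (addn0 k) i)).
    by apply: pt_ext => p hp; rewrite coord_cast coord_vcat -{1}(addn0 k) hp.
  apply: definable_ext (definable_cast (addn0 k) hP) => x; split.
    by exists (fun _ => ozero F); rewrite vcat0.
  by case=> z; rewrite vcat0.
apply: definable_ext (IH _ (ds_proj (definable_cast (addnS k j) hP))) => x; split.
  by case=> z' [a H]; exists (vsnoc z' a); rewrite -vsnoc_vcat_cast.
by case=> z H; exists (vinit z), (z ord_max); rewrite vsnoc_vcat_cast vsnoc_vinit.
Qed.

Lemma definable_reindex k j (A : pt F j -> Prop) (s : 'I_j -> 'I_k) :
  def A -> def (fun x : pt F k => A (fun i => x (s i))).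
Proof.
move=> hA.
have hgraph : def (fun w : pt F (k + j) => A (rsub w) /\
                 forall i, w (rshift k i) = w (lshift j (s i))).
  apply: definable_and; first exact: definable_rsub.
  by apply: definable_forall_ord => i; exact: ds_diag.
apply: definable_ext (definable_exists_vcat hgraph) => x; split.
  case=> z [H1 H2]; rewrite rsub_vcat in H1.
  suff -> : (fun i => x (s i)) = z by [].
  by apply: functional_extensionality => i; have := H2 i; rewrite vcat_rshift vcat_lshift.
move=> H; exists (fun i => x (s i)); rewrite rsub_vcat; split => // i.
by rewrite vcat_rshift vcat_lshift.
Qed.

Definition is_reindexing k j (f : pt F k -> pt F j) :=
  exists s : 'I_j -> 'I_k, forall w i, f w i = w (s i).
Definition is_coordinate k (a : pt F k -> F) := exists l : 'I_k, forall w, a w = w l.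

Lemma definable_pull k j (A : pt F j -> Prop) (f : pt F k -> pt F j) :
  def A -> is_reindexing f -> def (fun w => A (f w)).
Proof.
move=> hA [s hs]; apply: definable_ext (definable_reindex s hA) => w.
by have -> : f w = (fun i => w (s i)) by apply: functional_extensionality => i; rewrite hs.
Qed.

Lemma reindexing_id k : is_reindexing (fun w : pt F k => w). Proof. by exists id. Qed.
Lemma reindexing_lsub k j1 j2 (f : pt F k -> pt F (j1 + j2)) :
  is_reindexing f -> is_reindexing (fun w => lsub (f w)).
Proof. by case=> s hs; exists (fun i => s (lshift j2 i)) => w i; rewrite /lsub hs. Qed.
Lemma reindexing_rsub k j1 j2 (f : pt F k -> pt F (j1 + j2)) :
  is_reindexing f -> is_reindexing (fun w => rsub (f w)).
Proof. by case=> s hs; exists (fun i => s (rshift j1 i)) => w i; rewrite /rsub hs. Qed.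
Lemma reindexing_vinit k j (f : pt F k -> pt F j.+1) :
  is_reindexing f -> is_reindexing (fun w => vinit (f w)).
Proof. by case=> s hs; exists (fun i => s (lift ord_max i)) => w i; rewrite /vinit hs. Qed.
Lemma reindexing_vcat k j1 j2 (f : pt F k -> pt F j1) (g : pt F k -> pt F j2) :
  is_reindexing f -> is_reindexing g -> is_reindexing (fun w => vcat (f w) (g w)).
Proof.
case=> s hs [t ht]; exists (vcat s t) => w i.
by rewrite /vcat; case: split.
Qed.
Lemma reindexing_vsnoc k j (f : pt F k -> pt F j) (a : pt F k -> F) :
  is_reindexing f -> is_coordinate a -> is_reindexing (fun w => vsnoc (f w) (a w)).
Proof.
case=> s hs [l hl]; exists (fun i => if unlift ord_max i is Some b then s b else l) => w i.
by rewrite /vsnoc; case: unlift => [b|]; rewrite ?hs ?hl.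
Qed.
Lemma reindexing_single k (a : pt F k -> F) :
  is_coordinate a -> is_reindexing (fun w => fun _ : 'I_1 => a w).
Proof. by case=> l hl; exists (fun _ => l) => w i; rewrite hl. Qed.

Lemma coordinate_var k (l : 'I_k) : is_coordinate (fun w : pt F k => w l).
Proof. by exists l. Qed.

Lemma definable_olt k (a b : pt F k -> F) :
  is_coordinate a -> is_coordinate b -> def (fun w => olt (a w) (b w)).
Proof.
case=> l hl [l' hl'].
have := definable_reindex (fun i : 'I_2 => if i == ord0 then l else l') (ds_lt D).
by apply: definable_ext => w; rewrite hl hl'.
Qed.
Lemma definable_eq k (a b : pt F k -> F) :
  is_coordinate a -> is_coordinate b -> def (fun w => a w = b w).
Proof. by case=> l hl [l' hl']; apply: definable_ext (ds_diag D l l') => w; rewrite hl hl'. Qed.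
Lemma definable_ole k (a b : pt F k -> F) :
  is_coordinate a -> is_coordinate b -> def (fun w => ole (a w) (b w)).
Proof. by move=> ha hb; apply: definable_or; [exact: definable_eq|exact: definable_olt]. Qed.
Lemma definable_eq_const k (a : pt F k -> F) c : is_coordinate a -> def (fun w => a w = c).
Proof.
case=> l hl; have := definable_reindex (fun _ : 'I_1 => l) (ds_const D c).
by apply: definable_ext => w; rewrite hl.
Qed.

Lemma definable_exists k (P : pt F k -> F -> Prop) :
  def (fun w : pt F k.+1 => P (vinit w) (w ord_max)) -> def (fun x => exists a, P x a).
Proof.
move=> h; apply: definable_ext (ds_proj h) => x.
by split; case=> a H; exists a; move: H; rewrite vinit_vsnoc vsnoc_max.
Qed.
Lemma definable_forall k (P : pt F k -> F -> Prop) :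
  def (fun w : pt F k.+1 => P (vinit w) (w ord_max)) -> def (fun x => forall a, P x a).
Proof.
move=> h; have := definable_not (@definable_exists _ (fun x a => ~ P x a) (definable_not h)).
apply: definable_ext => x; split=> [H a|H [a]]; last exact.
by apply: NNPP => H'; apply: H; exists a.
Qed.
Lemma definable_exists_pt k j (P : pt F k -> pt F j -> Prop) :
  def (fun w : pt F (k + j) => P (lsub w) (rsub w)) -> def (fun x => exists z, P x z).
Proof.
move=> h; apply: definable_ext (definable_exists_vcat h) => x.
by split; case=> z H; exists z; move: H; rewrite lsub_vcat rsub_vcat.
Qed.
Lemma definable_forall_pt k j (P : pt F k -> pt F j -> Prop) :
  def (fun w : pt F (k + j) => P (lsub w) (rsub w)) -> def (fun x => forall z, P x z).
Proof.
move=> h; have := definable_not (@definable_exists_pt _ _ (fun x z => ~ P x z) (definable_not h)).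
apply: definable_ext => x; split=> [H a|H [a]]; last exact.
by apply: NNPP => H'; apply: H; exists a.
Qed.

Lemma definable_fix_r k j (P : pt F k -> pt F j -> Prop) y :
  def (fun w : pt F (k + j) => P (lsub w) (rsub w)) -> def (fun x => P x y).
Proof.
move=> h.
have h2 : def (fun w : pt F (k + j) => P (lsub w) (rsub w) /\ forall i, w (rshift k i) = y i).
  by apply: definable_and => //; apply: definable_forall_ord => i;
     apply: definable_eq_const; exact: coordinate_var.
apply: definable_ext (definable_exists_vcat h2) => x; split.
  case=> z [H1 H2]; rewrite lsub_vcat rsub_vcat in H1.
  suff <- : z = y by [].
  by apply: functional_extensionality => i; rewrite -H2 vcat_rshift.
by move=> H; exists y; rewrite lsub_vcat rsub_vcat; split => // i; rewrite vcat_rshift.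
Qed.

(* Suffix letters: [c] a single coordinate, [v] a block of coordinates. *)
Lemma definable_pull_c k (T : F -> Prop) (a : pt F k -> F) :
  def (fun x : pt F 1 => T (x ord0)) -> is_coordinate a -> def (fun w => T (a w)).
Proof. by move=> hT ha; apply: definable_ext (definable_pull hT (reindexing_single ha)). Qed.
Lemma definable_pull_cc k (E : F -> F -> Prop) (a b : pt F k -> F) :
  def (fun v : pt F 2 => E (v ord0) (v ord_max)) -> is_coordinate a -> is_coordinate b ->
  def (fun w => E (a w) (b w)).
Proof.
move=> hE ha hb.
apply: definable_ext (definable_pull hE (reindexing_vsnoc (reindexing_single ha) hb)) => w.
have -> : (ord0 : 'I_2) = lift ord_max ord0 by apply: val_inj.
by rewrite vsnoc_lift vsnoc_max.
Qed.
Lemma definable_pull_cv k j (E : F -> pt F j -> Prop) (a : pt F k -> F) (f : pt F k -> pt F j) :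
  def (fun w : pt F (1 + j) => E (lsub w ord0) (rsub w)) -> is_coordinate a -> is_reindexing f ->
  def (fun w => E (a w) (f w)).
Proof.
move=> hE ha hf.
apply: definable_ext (definable_pull hE (reindexing_vcat (reindexing_single ha) hf)) => w.
by rewrite lsub_vcat rsub_vcat.
Qed.
Lemma definable_pull_vc k j (E : pt F j -> F -> Prop) (f : pt F k -> pt F j) (a : pt F k -> F) :
  def (fun w : pt F (j + 1) => E (lsub w) (rsub w ord0)) -> is_reindexing f -> is_coordinate a ->
  def (fun w => E (f w) (a w)).
Proof.
move=> hE hf ha.
apply: definable_ext (definable_pull hE (reindexing_vcat hf (reindexing_single ha))) => w.
by rewrite lsub_vcat rsub_vcat.
Qed.
Lemma definable_pull_vvc k j1 j2 (E : pt F j1 -> pt F j2 -> F -> Prop)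
    (f : pt F k -> pt F j1) (g : pt F k -> pt F j2) (a : pt F k -> F) :
  def (fun w : pt F ((j1 + j2) + 1) => E (lsub (lsub w)) (rsub (lsub w)) (rsub w ord0)) ->
  is_reindexing f -> is_reindexing g -> is_coordinate a -> def (fun w => E (f w) (g w) (a w)).
Proof.
move=> hE hf hg ha.
have := definable_pull hE (reindexing_vcat (reindexing_vcat hf hg) (reindexing_single ha)).
by apply: definable_ext => w; rewrite !lsub_vcat !rsub_vcat.
Qed.
Lemma definable_pull_vvv k j1 j2 j3 (E : pt F j1 -> pt F j2 -> pt F j3 -> Prop)
    (f : pt F k -> pt F j1) (g : pt F k -> pt F j2) (h : pt F k -> pt F j3) :
  def (fun w : pt F ((j1 + j2) + j3) => E (lsub (lsub w)) (rsub (lsub w)) (rsub w)) ->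
  is_reindexing f -> is_reindexing g -> is_reindexing h -> def (fun w => E (f w) (g w) (h w)).
Proof.
move=> hE hf hg hh.
have := definable_pull hE (reindexing_vcat (reindexing_vcat hf hg) hh).
by apply: definable_ext => w; rewrite !lsub_vcat !rsub_vcat.
Qed.

End Definability.

Ltac reindexing_rec n := match n with
  | O => fail
  | S ?m => first
    [ exact: reindexing_id
    | exact: coordinate_var
    | exact: (reindexing_lsub (reindexing_id _ _))
    | exact: (reindexing_rsub (reindexing_id _ _))
    | exact: (reindexing_vinit (reindexing_id _ _))
    | apply: reindexing_vsnoc; reindexing_rec m
    | apply: reindexing_lsub; reindexing_rec m
    | apply: reindexing_rsub; reindexing_rec m ]
  end.
Ltac reindexing_tac := reindexing_rec 6.

Ltac definable_step := first
  [ apply: definable_and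
  | apply: definable_not
  | apply: definable_imp
  | apply: definable_forall_ord => ?
  | apply: definable_exists
  | apply: definable_forall
  | apply: definable_exists_pt
  | apply: definable_forall_pt
  | apply: definable_olt; reindexing_tac
  | apply: definable_ole; reindexing_tac
  | apply: definable_eq_const; reindexing_tac
  | apply: definable_eq; reindexing_tac ].

Ltac definable_atom H := first
  [ refine (definable_pull_c H _); reindexing_tac
  | refine (definable_pull_cc H _ _); reindexing_tac
  | refine (definable_pull_cv H _ _); reindexing_tac
  | refine (definable_pull_vc H _ _); reindexing_tac
  | refine (definable_pull_vvc H _ _ _); reindexing_tac
  | refine (definable_pull_vvv H _ _ _); reindexing_tac
  | refine (definable_pull H _); reindexing_tac ].

(* Decompose a first-order formula into connectives, quantifiers, order atoms
   and instances of the given definable relations. *)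
Ltac definable_tac atoms := do 20 (try atoms; try definable_step).

Section Topology.
Variable F : ogroup.

Lemma closed_ext n (A B : pt F n -> Prop) : (forall x, A x <-> B x) -> closed_set A -> closed_set B.
Proof.
move=> h hA x hx; have [lo [hi [h1 h2]]] := hA x (fun H => hx ((h x).1 H)).
by exists lo, hi; split => // y hy hB; exact: h2 hy ((h y).2 hB).
Qed.

Lemma closed_cast a b (e : a = b) (A : pt F a -> Prop) :
  closed_set A -> closed_set (fun w : pt F b => A (fun i => w (cast_ord e i))).
Proof.
case: b / e => h; apply: closed_ext h => x.
suff -> : (fun i => x (cast_ord (erefl a) i)) = x by [].
by apply: functional_extensionality => i; rewrite cast_ord_id.
Qed.

Lemma closed_and n (A B : pt F n -> Prop) :
  closed_set A -> closed_set B -> closed_set (fun x => A x /\ B x).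
Proof.
move=> hA hB x hx; case: (classic (A x)) => ha.
  have [lo [hi [h1 h2]]] := hB x (fun hb => hx (conj ha hb)).
  by exists lo, hi; split => // y hy [_ hb]; exact: h2 hy hb.
have [lo [hi [h1 h2]]] := hA x ha.
by exists lo, hi; split => // y hy [ha2 _]; exact: h2 hy ha2.
Qed.

Lemma closed_lsub k j (A : pt F k -> Prop) :
  closed_set A -> closed_set (fun w : pt F (k + j) => A (lsub w)).
Proof.
move=> hA w hw; have [lo [hi [h1 h2]]] := hA _ hw.
exists (vcat lo (fun _ => None)), (vcat hi (fun _ => None)).
by split=> [|y /in_box_vcat [hy _]]; [apply/in_box_vcat|exact: h2].
Qed.
Lemma closed_rsub k j (A : pt F j -> Prop) :
  closed_set A -> closed_set (fun w : pt F (k + j) => A (rsub w)).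
Proof.
move=> hA w hw; have [lo [hi [h1 h2]]] := hA _ hw.
exists (vcat (fun _ => None) lo), (vcat (fun _ => None) hi).
by split=> [|y /in_box_vcat [_ hy]]; [apply/in_box_vcat|exact: h2].
Qed.

Lemma closed_slice k j (A : pt F (k + j) -> Prop) (z : pt F j) :
  closed_set A -> closed_set (fun x : pt F k => A (vcat x z)).
Proof.
move=> hA x hx; have [lo [hi [h1 h2]]] := hA _ hx.
have [hl hr] := (in_box_cat _ _ _).1 h1; rewrite lsub_vcat rsub_vcat in hl hr.
exists (fun i => lo (lshift j i)), (fun i => hi (lshift j i)); split => // y hy.
by apply: h2; apply/in_box_cat; rewrite lsub_vcat rsub_vcat.
Qed.

Lemma closed_fiber n (A : pt F n.+1 -> Prop) (v : pt F n) :
  closed_set A -> closed_set (fun u : pt F 1 => A (vsnoc v (u ord0))).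
Proof.
move=> hA u hu; have [lo [hi [h1 h2]]] := hA _ hu.
have [hl [hm hr]] := (in_box_vsnoc _ _ _).1 h1; rewrite vinit_vsnoc vsnoc_max in hl hm hr.
exists (fun _ => lo ord_max), (fun _ => hi ord_max); split; first by apply/in_box1.
move=> y /in_box1 hy; apply: h2; apply/in_box_vsnoc; rewrite vinit_vsnoc vsnoc_max; by split.
Qed.

Lemma closed_nbhd_vsnoc N (C : pt F N.+1 -> Prop) y s :
  closed_set C -> ~ C (vsnoc y s) ->
  exists (l h : 'I_N -> option F) (u v : option F),
    in_box l h y /\ lo_ok u s /\ hi_ok v s /\
    forall y' a', in_box l h y' -> lo_ok u a' -> hi_ok v a' -> ~ C (vsnoc y' a').
Proof.
move=> hcl /hcl [lo [hi [/in_box_vsnoc [hin1 [hin2 hin3]] hout]]].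
rewrite vinit_vsnoc vsnoc_max in hin1 hin2 hin3.
exists (fun i => lo (lift ord_max i)), (fun i => hi (lift ord_max i)), (lo ord_max), (hi ord_max).
do 3 (split; first done).
by move=> y' a' h1 h2 h3; apply: hout; apply/in_box_vsnoc; rewrite vinit_vsnoc vsnoc_max.
Qed.

Lemma closed_sublevel n (K : pt F n -> Prop) (h : pt F n -> F) t :
  closed_set K -> continuous_on K (to1 h) -> closed_set (fun x => K x /\ ole (h x) t).
Proof.
move=> hK hc x hx; case: (classic (K x)) => kx; last first.
  have [lo [hi [h1 h2]]] := hK _ kx.
  by exists lo, hi; split => // y hy [ky _]; exact: h2 hy ky.
have ht : olt t (h x) by apply: not_ole_olt => H; exact: hx (conj kx H).
have [lo [hi [h1 h2]]] := hc _ kx (fun _ => Some t) (fun _ => None) (fun i => conj ht I).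
exists lo, hi; split => // y hy [ky hle].
by have [/= H _] := h2 _ ky hy ord0; exact: olt_nole H hle.
Qed.


Lemma continuous_comp n k l (A : pt F n -> Prop) (B : pt F k -> Prop)
    (f : pt F n -> pt F k) (h : pt F k -> pt F l) :
  continuous_on A f -> continuous_on B h -> (forall x, A x -> B (f x)) ->
  continuous_on A (fun x => h (f x)).
Proof.
move=> hf hh hAB x hx lo hi hbox.
have [lo1 [hi1 [h1 h2]]] := hh _ (hAB _ hx) _ _ hbox.
have [lo2 [hi2 [h3 h4]]] := hf _ hx _ _ h1.
by exists lo2, hi2; split => // y hy hy'; apply: h2; [exact: hAB|exact: h4].
Qed.

Lemma continuous_vcat n k j (f : pt F n -> pt F k) (g : pt F n -> pt F j) (A : pt F n -> Prop) :
  continuous_on A f -> continuous_on A g -> continuous_on A (fun x => vcat (f x) (g x)).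
Proof.
move=> hf hg x hx lo hi /in_box_cat [].
rewrite lsub_vcat rsub_vcat => /(hf _ hx) [l1 [h1 [b1 H1]]] /(hg _ hx) [l2 [h2 [b2 H2]]].
exists (fun i => omax (l1 i) (l2 i)), (fun i => omin (h1 i) (h2 i)); split; first exact/in_box_inter.
move=> y hy /in_box_inter [c1 c2]; apply/in_box_cat; rewrite lsub_vcat rsub_vcat.
by split; [exact: H1|exact: H2].
Qed.

Lemma continuous_const n k (A : pt F n -> Prop) (c : pt F k) : continuous_on A (fun _ => c).
Proof. by move=> x _ lo hi hc; exists (fun _ => None), (fun _ => None). Qed.

Lemma continuous_id n (A : pt F n -> Prop) : continuous_on A (fun x => x).
Proof. by move=> x _ lo hi hx; exists lo, hi. Qed.

Lemma continuous_lsub k j (A : pt F (k + j) -> Prop) : continuous_on A (@lsub F k j).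
Proof.
move=> w _ lo hi hw; exists (vcat lo (fun _ => None)), (vcat hi (fun _ => None)).
by split=> [|y _ /in_box_vcat []//]; apply/in_box_vcat.
Qed.
Lemma continuous_rsub k j (A : pt F (k + j) -> Prop) : continuous_on A (@rsub F k j).
Proof.
move=> w _ lo hi hw; exists (vcat (fun _ => None) lo), (vcat (fun _ => None) hi).
by split=> [|y _ /in_box_vcat []//]; apply/in_box_vcat.
Qed.

End Topology.

Section DefinableCompleteness.
Variables (F : ogroup) (D : dstruct F).
Hypothesis hdc : definably_complete D.
Notation def := (definable D).

(* The supremum of [S] provided by definable completeness cannot be finite. *)
Lemma definable_real_induction (S : F -> Prop) :
  def (fun x : pt F 1 => S (x ord0)) ->
  (forall a b, ole a b -> S b -> S a) -> (exists a, S a) ->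
  (forall s, (forall a, olt a s -> S a) -> S s) ->
  (forall s, S s -> exists u : option F, hi_ok u s /\ forall c, olt s c -> hi_ok u c -> S c) ->
  forall a, S a.
Proof.
move=> hdef hdown [a0 ha0] hcl hop.
have [[s [hs1 hs2]] _] := hdc hdef.
have ub a : ~ S a -> forall b, S b -> ole b a.
  by move=> na b hb; apply: not_olt_ole => h; apply: na; apply: (hdown _ _ (olt_ole h) hb).
case: s hs1 hs2 => [|s|] hs1 hs2; first by have := hs1 _ ha0.
  have below a : olt a s -> S a.
    by move=> ha; apply: NNPP => na; have /= /(olt_nole ha) := hs2 (fin a) (ub _ na).
  have Ss := hcl _ below.
  have [u [hu1 hu2]] := hop _ Ss.
  move=> a; case: (ole_or_olt a s) => h; first exact: hdown h Ss.
  case: u hu1 hu2 => [u|] /= hu1 hu2; last exact: hu2.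
  case: (ole_or_olt u a) => h'; last exact: hu2.
  have Su : S u.
    apply: hcl => b hb; case: (ole_or_olt b s) => h2; first exact: hdown h2 Ss.
    exact: hu2.
  by have /= /(olt_nole hu1) := hs1 _ Su.
by move=> a; apply: NNPP => na; have := hs2 (fin a) (ub _ na).
Qed.

Definition avoids_below N (C : pt F N.+1 -> Prop) (y : pt F N) (a : F) :=
  exists p q : pt F N, in_fbox p q y /\
    forall a' (y' : pt F N), ole a' a -> in_fbox p q y' -> ~ C (vsnoc y' a').

Lemma definable_avoids_below N (C : pt F N.+1 -> Prop) y :
  def C -> def (fun x : pt F 1 => avoids_below C y (x ord0)).
Proof.
move=> hC; apply: (@definable_fix_r _ _ _ _ (fun x y => avoids_below C y (x ord0))).
by rewrite /avoids_below /in_fbox; definable_tac ltac:(definable_atom hC).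
Qed.

(* By real induction on [a]: at a finite [s] use a closed-set box around
   [vsnoc y s] to push past [s]. *)
Lemma avoids_below_all N (C : pt F N.+1 -> Prop) (lo : F) y :
  def C -> closed_set C -> (forall w, C w -> ole lo (w ord_max)) -> nontrivial F ->
  (forall a, ~ C (vsnoc y a)) -> forall a, avoids_below C y a.
Proof.
move=> hC hcl hlo nt nC.
apply: definable_real_induction; first exact: definable_avoids_below.
- move=> a b hab [p [q [h1 h2]]]; exists p, q; split => // a' y' h.
  by apply: h2; exact: ole_trans h hab.
- have [a0 ha0] := nontrivial_olt_below nt lo.
  have [p [q hpq]] := in_fbox_exists y nt.
  exists a0, p, q; split => // a' y' h _ /hlo; rewrite vsnoc_max => h1.
  exact: olt_nole (ole_olt_trans (ole_trans h1 h) ha0) (ole_refl _).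
- move=> s below.
  have [bl [bh [u [v [hin1 [hin2 [hin3 hout]]]]]]] := closed_nbhd_vsnoc hcl (nC s).
  have [p1 [q1 [hpq1 hav]]] : exists p1 q1, in_fbox p1 q1 y /\
      forall a' y', in_fbox p1 q1 y' -> ~ lo_ok u a' -> ~ C (vsnoc y' a').
    case: u hout hin2 => [l|] hout /= hl.
      have [p [q [h1 h2]]] := below _ hl.
      by exists p, q; split => // a' y' hy' hla'; apply: h2 => //; exact: not_olt_ole.
    by have [p [q hpq]] := in_fbox_exists y nt; exists p, q; split => // a' y' _ [].
  have [p [q [hpq hsub]]] := in_fbox_inter hpq1 hin1.
  exists p, q; split => // a' y' ha' /hsub [hy1 hy2].
  case: (classic (lo_ok u a')) => hl; last exact: hav.
  by apply: hout => //; exact: hi_ok_ole hin3 ha'.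
- move=> s [p1 [q1 [hpq1 hav]]].
  have [bl [bh [u [v [hin1 [hin2 [hin3 hout]]]]]]] := closed_nbhd_vsnoc hcl (nC s).
  exists v; split => // c hsc hc.
  have [p [q [hpq hsub]]] := in_fbox_inter hpq1 hin1.
  exists p, q; split => // a' y' ha' /hsub [hy1 hy2].
  case: (ole_or_olt a' s) => h; first exact: hav.
  by apply: hout => //; [exact: lo_ok_ole hin2 (olt_ole h)|exact: hi_ok_ole hc ha'].
Qed.

Lemma closed_proj_last N (C : pt F N.+1 -> Prop) (lo hi : F) :
  def C -> closed_set C -> (forall w, C w -> ole lo (w ord_max) /\ ole (w ord_max) hi) ->
  closed_set (fun y : pt F N => exists a, C (vsnoc y a)).
Proof.
move=> hC hcl hb y hy.
case: (classic (nontrivial F)) => nt; last first.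
  exists (fun _ => None), (fun _ => None); split => // y' _ [a ha]; apply: hy; exists a.
  by have <- : y' = y by apply: functional_extensionality => i; apply: trivial_eq.
have nC a : ~ C (vsnoc y a) by move=> h; apply: hy; exists a.
have [p [q [hpq hav]]] := avoids_below_all hC hcl (fun w hw => (hb w hw).1) nt nC hi.
exists (fun i => Some (p i)), (fun i => Some (q i)); split => // y' hy' [a ha].
by have [_ h2] := hb _ ha; rewrite vsnoc_max in h2; exact: hav h2 hy' ha.
Qed.

Lemma closed_proj k j (C : pt F (k + j) -> Prop) (lo hi : pt F j) :
  def C -> closed_set C ->
  (forall w, C w -> forall i, ole (lo i) (rsub w i) /\ ole (rsub w i) (hi i)) ->
  closed_set (fun x : pt F k => exists z, C (vcat x z)).
Proof.
elim: j C lo hi => [|j IH] C lo hi hC hcl hb.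
  apply: closed_ext (closed_slice (z := fun _ => ozero F) hcl) => x.
  split=> [h|[z]]; first by exists (fun _ => ozero F).
  by have -> : z = (fun _ => ozero F) by apply: functional_extensionality => -[].
set C' := fun w : pt F (k + j).+1 => C (fun i => w (cast_ord (addnS k j) i)).
have hb' w : C' w -> ole (lo ord_max) (w ord_max) /\ ole (w ord_max) (hi ord_max).
  by move=> hw; have := hb _ hw ord_max; rewrite rsub_cast_vinit vsnoc_max.
have hproj := closed_proj_last (definable_cast (addnS k j) hC) (closed_cast (e := addnS k j) hcl) hb'.
have hEb v : (exists a, C' (vsnoc v a)) ->
    forall i, ole (lo (lift ord_max i)) (rsub v i) /\ ole (rsub v i) (hi (lift ord_max i)).
  by move=> [a ha] i; have := hb _ ha (lift ord_max i); rewrite rsub_cast_vinit vinit_vsnoc vsnoc_lift.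
apply: closed_ext (IH _ _ _ (ds_proj (definable_cast (addnS k j) hC)) hproj hEb) => x; split.
  by case=> z' [a H]; exists (vsnoc z' a); move: H; rewrite /C' vsnoc_vcat_cast.
by case=> z H; exists (vinit z), (z ord_max); rewrite /C' vsnoc_vcat_cast vsnoc_vinit.
Qed.

Lemma closed_definable_min (S : F -> Prop) :
  def (fun x : pt F 1 => S (x ord0)) -> closed_set (fun u : pt F 1 => S (u ord0)) ->
  (exists a, S a) -> (exists l, forall a, S a -> ole l a) ->
  exists c, S c /\ forall a, S a -> ole c a.
Proof.
move=> hd hcl [a0 ha0] [l hl].
have [_ [s [hs1 hs2]]] := hdc hd.
case: s hs1 hs2 => [|s|] hs1 hs2; [by have := hs2 (fin l) hl| |by have := hs1 _ ha0].
exists s; split=> [|a ha]; last exact: hs1 _ ha.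
apply: NNPP => ns; have [lo [hi [/in_box1 [hlo hhi] hout]]] := hcl (fun _ => s) ns.
have near_s a : S a -> hi_ok (hi ord0) a -> False.
  by move=> ha hia; apply: (hout (fun _ => a)) => //; apply/in_box1; split => //;
     exact: lo_ok_ole hlo (hs1 _ ha).
case: (hi ord0) hhi near_s => [u|] /= hu near_s; last exact: near_s _ ha0 I.
have lb a : S a -> ole u a by move=> ha; apply: not_olt_ole => hau; exact: near_s ha hau.
by have /= /(olt_nole hu) := hs2 (fin u) lb.
Qed.

Lemma definable_fix_l j (E : F -> pt F j -> Prop) t :
  def (fun w : pt F (1 + j) => E (lsub w ord0) (rsub w)) -> def (E t).
Proof.
move=> hE; apply: (definable_ext (A := fun x => exists b, b = t /\ E b x)).
  by move=> x; split=> [[b [-> ?]]|?] //; exists t.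
definable_tac ltac:(definable_atom hE).
Qed.

(* One-dimensional case of [nested_closed_inter]: the supremum of the minima
   of the [E t] is a common point. *)
Lemma nested_closed_inter1 (T : F -> Prop) (E : F -> F -> Prop) (lo hi : F) :
  def (fun x : pt F 1 => T (x ord0)) ->
  def (fun v : pt F 2 => E (v ord0) (v ord_max)) ->
  (forall t, closed_set (fun u : pt F 1 => E t (u ord0))) ->
  (forall t a, E t a -> ole lo a /\ ole a hi) ->
  (forall t t', T t -> T t' -> ole t t' -> forall a, E t a -> E t' a) ->
  (forall t, T t -> exists a, E t a) -> (exists t, T t) ->
  exists a, forall t, T t -> E t a.
Proof.
move=> hT hE hcl hb hinc hne [t0 ht0].
have hmin t : T t -> exists c, E t c /\ forall a, E t a -> ole c a.
  move=> ht; apply: closed_definable_min => //; last by exists lo => a /hb [].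
  - rewrite -/(definable D (fun x : pt F 1 => E t (x ord0))).
    apply: (@definable_fix_l 1 (fun t x => E t (x ord0))).
    definable_tac ltac:(definable_atom hE).
  - exact: hne.
set mins := fun c => exists t, T t /\ E t c /\ forall a, E t a -> ole c a.
have hmins : def (fun x : pt F 1 => mins (x ord0)).
  by rewrite /mins; definable_tac ltac:(try definable_atom hE; try definable_atom hT).
have [[s [hs1 hs2]] _] := hdc hmins.
have [c0 hc0] := hmin _ ht0.
have mins_c0 : mins c0 by exists t0.
case: s hs1 hs2 => [|s|] hs1 hs2; first by have := hs1 _ mins_c0.
  exists s => t ht; apply: NNPP => ns.
  have [lo' [hi' [/in_box1 [hl1 hh1] hout]]] := hcl t (fun _ => s) ns.
  have [c' [[t' [ht' [hc'1 hc'2]]] hlc']] : exists c', mins c' /\ lo_ok (lo' ord0) c'.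
    case: (lo' ord0) hl1 => [l|] /= hl; last by exists c0.
    apply: NNPP => H; have ub c : mins c -> ole c l.
      by move=> hc; apply: not_olt_ole => hlc; apply: H; exists c.
    by have /= /(olt_nole hl) := hs2 (fin l) ub.
  have [tt [htt [htt1 htt2]]] : exists tt, T tt /\ ole tt t /\ ole tt t'.
    by case: (ole_total t t') => h; [exists t|exists t']; do 2 split => //; exact: ole_refl.
  have [c'' [hc''1 hc''2]] := hmin _ htt.
  have mins_c'' : mins c'' by exists tt.
  have hc'c'' : ole c' c'' by apply: hc'2; exact: hinc htt ht' htt2 _ hc''1.
  apply: (hout (fun _ => c'')); last exact: hinc htt ht htt1 _ hc''1.
  by apply/in_box1; split; [exact: lo_ok_ole hlc' hc'c''|exact: hi_ok_ole hh1 (hs1 _ mins_c'')].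
have ub c : mins c -> ole c hi by move=> [t [ht [/hb [] ]]].
by have := hs2 (fin hi) ub.
Qed.

(* Induct on the dimension: project away the last coordinate (closed by
   [closed_proj_last]) and finish with [nested_closed_inter1] on a fiber. *)
Lemma nested_closed_inter j (T : F -> Prop) (E : F -> pt F j -> Prop) (lo hi : pt F j) :
  def (fun x : pt F 1 => T (x ord0)) ->
  def (fun w : pt F (1 + j) => E (lsub w ord0) (rsub w)) ->
  (forall t, closed_set (E t)) ->
  (forall t x, E t x -> forall i, ole (lo i) (x i) /\ ole (x i) (hi i)) ->
  (forall t t', T t -> T t' -> ole t t' -> forall x, E t x -> E t' x) ->
  (forall t, T t -> exists x, E t x) -> (exists t, T t) ->
  exists x, forall t, T t -> E t x.
Proof.
elim: j E lo hi => [|j IH] E lo hi hT hE hcl hb hinc hne hT0.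
  exists (fun _ => ozero F) => t ht; have [x hx] := hne _ ht.
  by have <- : x = (fun _ => ozero F) by apply: functional_extensionality => -[].
set E' := fun t (v : pt F j) => exists a, E t (vsnoc v a).
have hE' : def (fun w : pt F (1 + j) => E' (lsub w ord0) (rsub w)).
  by rewrite /E'; definable_tac ltac:(definable_atom hE).
have hcl' t : closed_set (E' t).
  apply: (@closed_proj_last _ _ (lo ord_max) (hi ord_max)); first exact: definable_fix_l.
    exact: hcl.
  by move=> w hw; exact: hb hw ord_max.
have hb' t x : E' t x ->
    forall i, ole (lo (lift ord_max i)) (x i) /\ ole (x i) (hi (lift ord_max i)).
  by move=> [a ha] i; have := hb _ _ ha (lift ord_max i); rewrite vsnoc_lift.
have hinc' t t' : T t -> T t' -> ole t t' -> forall x, E' t x -> E' t' x.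
  by move=> h1 h2 h3 x [a ha]; exists a; exact: hinc h1 h2 h3 _ ha.
have hne' t : T t -> exists x, E' t x.
  by move=> /hne [x hx]; exists (vinit x), (x ord_max); rewrite vsnoc_vinit.
have [v0 hv0] := IH E' _ _ hT hE' hcl' hb' hinc' hne' hT0.
have hEv0 : def (fun v : pt F 2 => E (v ord0) (vsnoc v0 (v ord_max))).
  apply: (@definable_fix_r _ _ _ _ (fun (x : pt F 2) y => E (x ord0) (vsnoc y (x ord_max)))).
  definable_tac ltac:(definable_atom hE).
have [a0 ha0] : exists a, forall t, T t -> E t (vsnoc v0 a).
  apply: (nested_closed_inter1 (lo := lo ord_max) (hi := hi ord_max) hT hEv0) => //.
  - by move=> t; exact: closed_fiber (hcl t).
  - by move=> t a h; have := hb _ _ h ord_max; rewrite vsnoc_max.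
  - by move=> t t' h1 h2 h3 a h; exact: hinc _ _ h1 h2 h3 _ h.
by exists (vsnoc v0 a0).
Qed.

End DefinableCompleteness.

Section OrbitInfimum.
Variables (F : ogroup) (D : dstruct F).
Hypothesis hdc : definably_complete D.
Variables (m n : nat) (G : dtopgroup D m).
Hypothesis hGc : definably_compact D (gset G).
Variable X : dGset G n.
Hypothesis hXc : closed_set (xset X).
Variable phi : pt F n -> F.
Hypothesis hphi_def : dfun D (xset X) (to1 phi).
Hypothesis hphi_cont : continuous_on (xset X) (to1 phi).
Notation def := (definable D).

Definition phi_act g x := phi (act X g x).

Definition act_graph (g : pt F m) (x y : pt F n) := gset G g /\ xset X x /\ y = act X g x.
Definition phi_graph (y : pt F n) (t : F) := xset X y /\ t = phi y.
Definition phi_act_rel (R : F -> F -> Prop) g x t := gset G g /\ xset X x /\ R (phi_act g x) t.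

Lemma definable_act_graph :
  def (fun w : pt F ((m + n) + n) => act_graph (lsub (lsub w)) (rsub (lsub w)) (rsub w)).
Proof.
apply: definable_ext (x_act_def X) => w; rewrite /act_graph; split.
  by case=> [[h1 h2] h3]; do 2 split => //; exact: functional_extensionality.
by case=> h1 [h2 ->].
Qed.

Lemma definable_phi_graph : def (fun w : pt F (n + 1) => phi_graph (lsub w) (rsub w ord0)).
Proof.
apply: definable_ext hphi_def => w; rewrite /phi_graph.
by split=> -[h1 h2]; split=> // j; rewrite ?h2 // (ord1 j).
Qed.

Lemma definable_phi_act_rel (R : F -> F -> Prop) :
  def (fun v : pt F 2 => R (v ord0) (v ord_max)) ->
  def (fun w : pt F ((m + n) + 1) => phi_act_rel R (lsub (lsub w)) (rsub (lsub w)) (rsub w ord0)).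
Proof.
move=> hR.
apply: (definable_ext (A := fun w : pt F ((m + n) + 1) => exists y r,
   act_graph (lsub (lsub w)) (rsub (lsub w)) y /\ phi_graph y r /\ R r (rsub w ord0))).
  move=> w; split=> [[y [r [[hg [hx ->]] [[_ ->] hr]]]]|[hg [hx hr]]] //.
  by exists (act X (lsub (lsub w)) (rsub (lsub w))), (phi_act (lsub (lsub w)) (rsub (lsub w)));
     do 3 split => //; apply: x_act.
have hA := definable_act_graph; have hP := definable_phi_graph.
definable_tac ltac:(try definable_atom hA; try definable_atom hP; try definable_atom hR).
Qed.

Lemma continuous_phi_act k (A : pt F k -> Prop) (f : pt F k -> pt F m) (h : pt F k -> pt F n) :
  continuous_on A f -> continuous_on A h -> (forall w, A w -> gset G (f w) /\ xset X (h w)) ->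
  continuous_on A (to1 (fun w => phi_act (f w) (h w))).
Proof.
move=> hf hh hA.
have hact := continuous_comp (@x_act_cont _ _ _ _ _ X) hphi_cont (fun z hz => x_act hz.1 hz.2).
have := continuous_comp (continuous_vcat hf hh) hact.
rewrite /to1 /phi_act; under [fun w => _]functional_extensionality => w do
  rewrite lsub_vcat rsub_vcat.
by apply=> w /hA; rewrite lsub_vcat rsub_vcat.
Qed.

Lemma phi_act_min x : xset X x ->
  exists g0, gset G g0 /\ forall g, gset G g -> ole (phi_act g0 x) (phi_act g x).
Proof.
move=> hx; have [hGdef [hGcl [lo [hi hGb]]]] := hGc.
have hle := definable_phi_act_rel (R := @ole F) ltac:(definable_tac idtac).
have [|||||||g0 hg0] := nested_closed_inter hdc
  (T := fun t => exists g, phi_act_rel (@ole F) g x t)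
  (E := fun t g => phi_act_rel (@ole F) g x t) (lo := lo) (hi := hi).
- apply: (@definable_fix_r _ _ _ _ (fun (u : pt F 1) x => exists g, phi_act_rel (@ole F) g x (u ord0))).
  definable_tac ltac:(definable_atom hle).
- apply: (@definable_fix_r _ _ _ _ (fun (w : pt F (1 + m)) x =>
    phi_act_rel (@ole F) (rsub w) x (lsub w ord0))).
  definable_tac ltac:(definable_atom hle).
- move=> t; have := closed_sublevel (t := t) hGcl (continuous_phi_act (continuous_id (A := gset G))
    (continuous_const (c := x)) (fun g hg => conj hg hx)).
  by apply: closed_ext => g; rewrite /phi_act_rel; tauto.
- by move=> t g [hg _]; exact: hGb.
- move=> t t' _ _ htt g [hg [_ hle']]; do 2 split => //; exact: ole_trans hle' htt.
- by [].
- by exists (phi_act (gone G) x), (gone G); split; [exact: g_one|split=> //; exact: ole_refl].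
have min_at g : gset G g -> phi_act_rel (@ole F) g0 x (phi_act g x).
  by move=> hg; apply: hg0; exists g; do 2 split => //; exact: ole_refl.
exists g0; split=> [|g /min_at [_ [_ //]]].
by have [] := min_at _ (@g_one _ _ _ G).
Qed.

Lemma closed_orbit_sublevel a : closed_set (fun y : pt F n => exists g, phi_act_rel (@ole F) g y a).
Proof.
have [hGdef [hGcl [lo [hi hGb]]]] := hGc.
have hle := definable_phi_act_rel (R := @ole F) ltac:(definable_tac idtac).
set C := fun w : pt F (n + m) => phi_act_rel (@ole F) (rsub w) (lsub w) a.
have hC : def C.
  apply: (@definable_fix_r _ _ _ _ (fun (w : pt F (n + m)) (c : pt F 1) =>
    phi_act_rel (@ole F) (rsub w) (lsub w) (c ord0)) (fun _ => a)).
  definable_tac ltac:(definable_atom hle).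
have hcl : closed_set C.
  have := closed_sublevel (t := a) (closed_and (closed_rsub hGcl) (closed_lsub hXc))
    (continuous_phi_act (continuous_rsub (A := fun w : pt F (n + m) => gset G (rsub w) /\ xset X (lsub w)))
      (continuous_lsub (A := fun w : pt F (n + m) => gset G (rsub w) /\ xset X (lsub w))) (fun w hw => hw)).
  by apply: closed_ext => w; rewrite /C /phi_act_rel; tauto.
apply: closed_ext (closed_proj hdc hC hcl (fun w hw => hGb _ hw.1)) => y.
by split; case=> g H; exists g; move: H; rewrite /C ?lsub_vcat ?rsub_vcat.
Qed.

(* A chosen minimizer [g_x]; [epsilon] needs no existence proof to be defined,
   so [Phi] does not depend on the hypotheses. *)
Definition argmin x := epsilon (inhabits (gone G))
  (fun g0 => gset G g0 /\ forall g, gset G g -> ole (phi_act g0 x) (phi_act g x)).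
Definition Phi x := phi_act (argmin x) x.

Lemma argmin_spec x : xset X x ->
  gset G (argmin x) /\ forall g, gset G g -> ole (Phi x) (phi_act g x).
Proof. by move=> hx; exact: (epsilon_spec (inhabits (gone G)) _ (phi_act_min hx)). Qed.

Lemma Phi_is_inf x : xset X x ->
  is_inf (fun t => exists g, gset G g /\ t = phi (act X g x)) (Phi x).
Proof.
move=> /argmin_spec [hg hmin]; split=> [a [g [hg' ->]]|t]; first exact: hmin.
by apply; exists (argmin x).
Qed.

Lemma Phi_attained x : xset X x -> exists g, gset G g /\ Phi x = phi (act X g x).
Proof. by move=> /argmin_spec [hg _]; exists (argmin x). Qed.

(* [g_x g^-1] competes for [g x], and [g_(g x) g] competes for [x]. *)
Lemma Phi_act g x : gset G g -> xset X x -> Phi (act X g x) = Phi x.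
Proof.
move=> hg hx; have hgx : xset X (act X g x) by apply: x_act.
have [hax hminx] := argmin_spec hx; have [hagx hmingx] := argmin_spec hgx.
apply: ole_anti.
  have := hmingx _ (g_mul hax (g_inv hg)).
  have e : gmul G (gmul G (argmin x) (ginv G g)) g = argmin x.
    by rewrite -g_mulA ?g_mulVl ?g_mul1r //; apply: g_inv.
  by rewrite /phi_act -x_actM ?e //; apply: g_mul => //; apply: g_inv.
by have := hminx _ (g_mul hagx hg); rewrite /phi_act x_actM.
Qed.

Lemma definable_Phi : dfun D (xset X) (to1 Phi).
Proof.
have hGdef : def (gset G) by case: hGc.
have hXdef : def (xset X) := x_def X.
have heq := definable_phi_act_rel (R := fun a b => b = a) ltac:(definable_tac idtac).
have hge := definable_phi_act_rel (R := fun a b => ole b a) ltac:(definable_tac idtac).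
have hd : def (fun z : pt F (n + 1) => xset X (lsub z) /\
    (exists g, phi_act_rel (fun a b => b = a) g (lsub z) (rsub z ord0)) /\
    forall g, gset G g -> phi_act_rel (fun a b => ole b a) g (lsub z) (rsub z ord0)).
  by definable_tac ltac:(try definable_atom heq; try definable_atom hge;
    try definable_atom hXdef; try definable_atom hGdef).
apply: definable_ext hd => z; split.
  case=> hx [[g [hg [_ e]]] H]; split => // j; rewrite (ord1 j) /to1.
  have [hax hmin] := argmin_spec hx.
  apply: ole_anti; first by have [_ []] := H _ hax.
  by rewrite e; exact: hmin _ hg.
case=> hx H; have e : rsub z ord0 = Phi (lsub z) by exact: H.
have [hax hmin] := argmin_spec hx.
by split=> //; split=> [|g hg]; [exists (argmin (lsub z))|]; rewrite e; do 2 split => //; exact: hmin.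
Qed.

Lemma Phi_olt_near x0 b : xset X x0 -> olt (Phi x0) b ->
  exists l h, in_box l h x0 /\ forall y, xset X y -> in_box l h y -> olt (Phi y) b.
Proof.
move=> hx0 hb; have [hg0 _] := argmin_spec hx0.
have hbox : in_box (fun _ => None) (fun _ => Some b) (to1 (phi_act (argmin x0)) x0).
  by apply/in_box1.
have [l [h [hl hout]]] := continuous_phi_act (continuous_const (c := argmin x0))
  (continuous_id (A := xset X)) (fun y hy => conj hg0 hy) hx0 hbox.
exists l, h; split => // y hy hy'; have [_ /= H] := hout _ hy hy' ord0.
exact: ole_olt_trans (proj2 (argmin_spec hy) _ hg0) H.
Qed.

Lemma Phi_ogt_near x0 a : xset X x0 -> olt a (Phi x0) ->
  exists l h, in_box l h x0 /\ forall y, xset X y -> in_box l h y -> olt a (Phi y).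
Proof.
move=> hx0 ha.
have nZ : ~ exists g, phi_act_rel (@ole F) g x0 a.
  case=> g [hg [_ hle]]; exact: olt_nole ha (ole_trans (proj2 (argmin_spec hx0) _ hg) hle).
have [l [h [hl hout]]] := closed_orbit_sublevel nZ.
exists l, h; split => // y hy hy'; apply: not_ole_olt => H; apply: (hout _ hy').
by exists (argmin y); have [hay _] := argmin_spec hy.
Qed.

Lemma continuous_Phi : continuous_on (xset X) (to1 Phi).
Proof.
move=> x0 hx0 lo hi /in_box1 [hlo hhi].
have [l1 [h1 [hb1 W1]]] : exists l1 h1, in_box l1 h1 x0 /\
    forall y, xset X y -> in_box l1 h1 y -> hi_ok (hi ord0) (Phi y).
  case: (hi ord0) hhi => [b|] /= hb; first exact: Phi_olt_near.
  by exists (fun _ => None), (fun _ => None).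
have [l2 [h2 [hb2 W2]]] : exists l2 h2, in_box l2 h2 x0 /\
    forall y, xset X y -> in_box l2 h2 y -> lo_ok (lo ord0) (Phi y).
  case: (lo ord0) hlo => [a|] /= ha; first exact: Phi_ogt_near.
  by exists (fun _ => None), (fun _ => None).
exists (fun i => omax (l1 i) (l2 i)), (fun i => omin (h1 i) (h2 i)).
split=> [|y hy /in_box_inter [hy1 hy2]]; first exact/in_box_inter.
by apply/in_box1; split; [exact: W2|exact: W1].
Qed.

End OrbitInfimum.

Theorem lemma2p1 (F : ogroup) (D : dstruct F)
  (hdc : definably_complete D)
  (m n : nat) (G : dtopgroup D m)
  (hGc : definably_compact D (gset G))
  (X : dGset G n)
  (hXc : closed_set (xset X))
  (phi : pt F n -> F)
  (hphi_def : dfun D (xset X) (to1 phi))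
  (hphi_cont : continuous_on (xset X) (to1 phi)) :
  exists Phi : pt F n -> F,
    (forall x, xset X x ->
       is_inf (fun t => exists g, gset G g /\ t = phi (act X g x)) (Phi x)) /\
    dfun D (xset X) (to1 Phi) /\
    (forall g x, gset G g -> xset X x -> Phi (act X g x) = Phi x) /\
    continuous_on (xset X) (to1 Phi) /\
    (forall x, xset X x -> exists g, gset G g /\ Phi x = phi (act X g x)).
Proof.
exists (Phi X phi); split; [|split; [|split; [|split]]].
- exact: Phi_is_inf.
- exact: definable_Phi.
- exact: Phi_act.
- exact: continuous_Phi.
- exact: Phi_attained.
Qed.
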